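(* Let $r,h,g$ be positive integers with $g+h<gr$, and put $n=rg$. Then there exists an MR $(n,r,h,1)$-LRC over a field of size \[\ell\le\left(\max\left\{\tilde O\!\left(\tfrac nr\right),\ 2^r\right\}\right)^{\min\{h,\frac nr\}}.\]
   Context: $\tilde O(f)$ denotes $f\cdot(\log f)^{O(1)}$. Definition: let $\ell$ be a prime power, $a,g,r,h$ positive integers with $ga+h<gr$, $n=gr$, $k=n-ga-h$. An MR (maximally recoverable) $(n,r,h,a)_\ell$-LRC is an $[n,k]$ linear code over $\mathbb{F}_\ell$ with a parity-check matrix $H$ of the block form whose first $ga$ rows are block diagonal with diagonal blocks $A_1,\dots,A_g$ (each $a\times r$, coordinates split into $g$ consecutive groups of size $r$) and whose last $h$ rows are $(D_1|\cdots|D_g)$ with each $D_i$ of size $h\times r$, such that (i) each $A_i$ generates an $[r,a,r-a+1]_\ell$ MDS code, and (ii) every set of $ag+h$ columns of $H$ consisting of any $a$ columns from each group together with any $h$ further columns is linearly independent over $\mathbb{F}_\ell$. ''Over a field of size $\ell$'' means an MR $(n,r,h,a)_\ell$-LRC. *)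

From HB Require Import structures.
From mathcomp Require Import all_boot all_order all_algebra all_field.
From mathcomp Require Import zify.
Set Implicit Arguments. Unset Strict Implicit. Unset Printing Implicit Defensive.
Import GRing.Theory.
Local Open Scope ring_scope.

(* Coordinates 0..g*r-1 are split into g consecutive groups of size r;
   column j lies in group j %/ r.  Rows 0..g*a-1 form the block-diagonal
   part (row i belongs to block i %/ a); rows g*a..g*a+h-1 are the D-part. *)

Lemma mr_row_lt (g a h : nat) (k : 'I_g) (x : 'I_a) : (k * a + x < g * a + h)%N.
Proof.
have := ltn_ord k; have := ltn_ord x; move=> Hx Hk.
have : (k.+1 * a <= g * a)%N by rewrite leq_mul2r Hk orbT.
nia.
Qed.

Lemma mr_col_lt (g r : nat) (k : 'I_g) (y : 'I_r) : (k * r + y < g * r)%N.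
Proof.
have := ltn_ord k; have := ltn_ord y; move=> Hy Hk.
have : (k.+1 * r <= g * r)%N by rewrite leq_mul2r Hk orbT.
nia.
Qed.

Definition blockA (F : fieldType) (g r h a : nat)
  (H : 'M[F]_(g * a + h, g * r)) (k : 'I_g) : 'M[F]_(a, r) :=
  \matrix_(x < a, y < r) H (Ordinal (mr_row_lt h k x)) (Ordinal (mr_col_lt k y)).

Definition wt (F : fieldType) (m : nat) (u : 'rV[F]_m) : nat :=
  #|[set j : 'I_m | u 0 j != 0]|.

Definition gen_MDS (F : fieldType) (a r : nat) (A : 'M[F]_(a, r)) : Prop :=
  \rank A = a /\
  (forall v : 'rV[F]_a, v != 0 -> (r - a + 1 <= wt (v *m A))%N).

Definition group_of (g r : nat) (k : 'I_g) : {set 'I_(g * r)} :=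
  [set j : 'I_(g * r) | (j %/ r == k)%N].

Definition cols_indep (F : fieldType) (m n : nat) (M : 'M[F]_(m, n))
  (S : {set 'I_n}) : Prop :=
  row_free (colsub (fun i : 'I_#|S| => enum_val i) M)^T.

Definition MR_parity_check (F : fieldType) (g r h a : nat)
  (H : 'M[F]_(g * a + h, g * r)) : Prop :=
  [/\
      (forall (i : 'I_(g * a + h)) (j : 'I_(g * r)),
          (i < g * a)%N -> (i %/ a != j %/ r)%N -> H i j = 0),
      (* [n, k] code with k = n - g a - h *)
      \rank H = (g * a + h)%N,
      (forall k : 'I_g, gen_MDS (blockA H k)) &
      (forall T U : {set 'I_(g * r)},
          (forall k : 'I_g, #|T :&: group_of r k| = a) ->
          #|U| = h -> [disjoint T & U] ->
          cols_indep H (T :|: U))].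

Definition MR_LRC (F : fieldType) (g r h a : nat) : Prop :=
  exists H : 'M[F]_(g * a + h, g * r), MR_parity_check H.

From HB Require Import structures.
From mathcomp Require Import all_boot all_order all_algebra all_field.

Set Implicit Arguments. Unset Strict Implicit. Unset Printing Implicit Defensive.
Import GRing.Theory.
Local Open Scope ring_scope.

(** Work in characteristic 2. The parity-check matrix has the g indicator rows
   of the groups (so every A_k is the all-ones row, an [r, 1, r] MDS code) and
   the h rows (al_j ^+ 2 ^ i)_j, i < h, of a Moore matrix. Given one column t_k
   per group and h further columns U, the indicator rows let one replace each
   column j of U by the difference with t_(grp j); the remaining system is a
   Moore system in the points al_j - al_(t (grp j)), which is invertible as
   soon as these points are linearly independent over F_2: a nonzero
   linearised polynomial of degree at most 2 ^ (h - 1) cannot vanish on their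
   2 ^ h subset sums.
   The points are al_(k,y) = phi (e_y * x_k ^+ i)_(i < m), m = minn h g, with
   distinct x_k and F_2-independent e_y in K = GF(2 ^ s) and phi an additive
   bijection K ^ m -> F = GF(2 ^ (m s)). An F_2-relation among the shifted
   points touches at most m groups, so reading it coordinatewise gives a
   Vandermonde system that kills every group coefficient; but the coefficient
   of a touched group is a nonzero combination of the e_y. Finally
   s = maxn r (up_log 2 g) gives #|F| = (2 ^ s) ^ m <= (maxn (2 g) (2 ^ r)) ^ m. *)

(** In characteristic 2 this is linear independence over the prime field. *)
Definition F2_free (V : zmodType) (I : finType) (U : {set I}) (b : I -> V) :=
  forall W : {set I}, W \subset U -> W != set0 -> \sum_(j in W) b j != 0.

Lemma F2_free_comp (V : zmodType) (I J : finType) (U : {set I}) (b : I -> V)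
    (f : J -> I) :
  injective f -> F2_free U b -> F2_free (f @^-1: U) (b \o f).
Proof.
move=> inj_f freeU W sWU nzW; rewrite -(big_imset _ (in2W inj_f)) /=.
apply: freeU; last by rewrite -card_gt0 card_imset // card_gt0.
by apply/subsetP => _ /imsetP[j /(subsetP sWU) + ->]; rewrite inE.
Qed.

Section Char2.
Variable F : fieldType.
Hypothesis F2 : 2 \in [pchar F].

Lemma exprD_pow2 (x y : F) i : (x + y) ^+ (2 ^ i) = x ^+ (2 ^ i) + y ^+ (2 ^ i).
Proof. by apply: exprDn_pchar; rewrite pnatX (pnatE _ (isT : prime 2)) F2. Qed.

Lemma exprB_pow2 (x y : F) i : (x - y) ^+ (2 ^ i) = x ^+ (2 ^ i) - y ^+ (2 ^ i).
Proof. by rewrite !(oppr_pchar2 F2) exprD_pow2. Qed.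

Lemma subset_sum_inj (I : finType) (U : {set I}) (b : I -> F) :
  F2_free U b -> {in powerset U &, injective (fun W : {set I} => \sum_(j in W) b j)}.
Proof.
move=> freeU V W; rewrite !inE => sVU sWU /= eqVW.
have eqD : \sum_(j in V :\: W) b j = \sum_(j in W :\: V) b j.
  apply: (@addrI _ (\sum_(j in V :&: W) b j)).
  by rewrite -big_setID setIC -big_setID.
have sumD : \sum_(j in (V :\: W) :|: (W :\: V)) b j = 0.
  rewrite (eq_bigl [predU V :\: W & W :\: V]) => [|j]; last by rewrite !inE.
  rewrite bigU /= ?eqD ?addrr_pchar2 //.
  rewrite -setI_eq0; apply/eqP/setP => j; rewrite !inE.
  by case: (j \in V); case: (j \in W).
have sDU : (V :\: W) :|: (W :\: V) \subset U.
  by rewrite subUset !(subset_trans (subsetDl _ _)).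
apply/eqP; rewrite eqEsubset -!setD_eq0 -setU_eq0; apply/negPn/negP => nzD.
by have := freeU _ sDU nzD; rewrite sumD eqxx.
Qed.

Definition linpoly n (a : 'rV[F]_n) : {poly F} := \sum_(i < n) a 0 i *: 'X^(2 ^ i).

Lemma horner_linpoly n (a : 'rV_n) x :
  (linpoly a).[x] = \sum_(i < n) a 0 i * x ^+ (2 ^ i).
Proof. by rewrite horner_sum; apply: eq_bigr => i _; rewrite hornerZ hornerXn. Qed.

Lemma coef_linpoly n (a : 'rV_n) (i : 'I_n) : (linpoly a)`_(2 ^ i) = a 0 i.
Proof.
rewrite coef_sum (bigD1 i) //= coefZ coefXn eqxx mulr1 big1 ?addr0 // => l li.
by rewrite coefZ coefXn eqn_exp2l // (inj_eq val_inj) eq_sym (negbTE li) mulr0.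
Qed.

Lemma size_linpoly n (a : 'rV_n) : (size (linpoly a) <= 2 ^ n)%N.
Proof.
apply: (leq_trans (size_sum _ _ _)); apply/bigmax_leqP => i _.
apply: (leq_trans (size_scale_leq _ _)); rewrite size_polyXn.
rewrite (leq_trans _ (leq_pexp2l _ (ltn_ord i))) //.
by rewrite expnS mul2n -addnn -addn1 leq_add2l expn_gt0.
Qed.

Lemma linpoly_sum n (a : 'rV_n) (I : finType) (W : {set I}) (b : I -> F) :
  (linpoly a).[\sum_(j in W) b j] = \sum_(j in W) (linpoly a).[b j].
Proof.
apply: big_morph => [x y|]; rewrite !horner_linpoly.
  by rewrite -big_split; apply: eq_bigr => i _; rewrite exprD_pow2 mulrDr.
by rewrite big1 // => i _; rewrite expr0n expn_eq0 mulr0.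
Qed.

Lemma linpoly_free_roots_eq0 (I : finType) (U : {set I}) (b : I -> F) n (a : 'rV_n) :
  F2_free U b -> (n <= #|U|)%N -> {in U, forall j, (linpoly a).[b j] = 0} -> a = 0.
Proof.
move=> freeU nU rootU.
pose sums := [seq \sum_(j in W) b j | W : {set I} <- enum (powerset U)].
have rootsL : all (root (linpoly a)) sums.
  apply/allP => x /mapP[W]; rewrite mem_enum inE => sWU ->.
  by rewrite /root linpoly_sum big1 // => j /(subsetP sWU)/rootU.
have uniq_sums : uniq sums.
  rewrite map_inj_in_uniq ?enum_uniq // => V W; rewrite !mem_enum.
  exact: subset_sum_inj.
have /eqP L0 : linpoly a == 0.
  apply: contraTT (leq_trans (size_linpoly a) (leq_pexp2l (isT : (0 < 2)%N) nU)) => nzL.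
  rewrite -ltnNge -card_powerset cardE.
  by rewrite -(size_map (fun W : {set I} => \sum_(j in W) b j)) max_poly_roots.
by apply/rowP => i; rewrite mxE -coef_linpoly L0 coef0.
Qed.

Definition moore_mx n (b : 'I_n -> F) : 'M[F]_n := \matrix_(i, l) b l ^+ (2 ^ i).

Lemma moore_mx_free n (b : 'I_n -> F) : F2_free [set: 'I_n] b -> row_free (moore_mx b).
Proof.
move=> freeb; rewrite -kermx_eq0; apply/negP => /negP nzK.
have /eqP[] : nz_row (kermx (moore_mx b)) != 0 by rewrite nz_row_eq0.
apply: (linpoly_free_roots_eq0 freeb); first by rewrite cardsT card_ord.
move=> l _; have /sub_kermxP/rowP/(_ l) := nz_row_sub (kermx (moore_mx b)).
rewrite !mxE horner_linpoly => eq0; rewrite -[RHS]eq0.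
by apply: eq_bigr => i _; rewrite mxE.
Qed.

Lemma moore_eq0 (I : finType) (U : {set I}) (b c : I -> F) :
  F2_free U b -> (forall i, (i < #|U|)%N -> \sum_(j in U) c j * b j ^+ (2 ^ i) = 0) ->
  {in U, forall j, c j = 0}.
Proof.
move=> freeU sumU0 j jU.
pose eU : 'I_#|U| -> I := enum_val.
have freeM : row_free (moore_mx (b \o eU)).
  apply: moore_mx_free; have := F2_free_comp (@enum_val_inj _ U) freeU.
  by congr F2_free; apply/setP => l; rewrite !inE enum_valP.
pose cU : 'rV_#|U| := \row_l c (eU l).
have : cU *m (moore_mx (b \o eU))^T = 0.
  apply/rowP => i; rewrite !mxE -[RHS](sumU0 i (ltn_ord i)).
  rewrite (big_enum_val (fun j => c j * b j ^+ (2 ^ i))).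
  by apply: eq_bigr => l _; rewrite !mxE.
move/eqP; rewrite mulmx_free_eq0; last by rewrite /row_free mxrank_tr.
by move=> /eqP/rowP/(_ (enum_rank_in jU j)); rewrite !mxE /eU enum_rankK_in.
Qed.

Lemma mulrn_pchar2 (x : F) k : x *+ k = x *+ odd k.
Proof.
rewrite -[in LHS](odd_double_half k) mulrnDr -mul2n mulrnA.
by rewrite (mulrn_pchar F2) mul0rn addr0.
Qed.

Lemma F2_free_shift (I : finType) (U : {set I}) (b : I -> F) t :
  F2_free U b -> t \in U -> F2_free (U :\ t) (fun j => b j - b t).
Proof.
move=> freeU tU W sWUt nzW.
have tW : t \notin W by apply/negP => /(subsetP sWUt); rewrite !inE eqxx.
have sWU : W \subset U by apply: subset_trans sWUt (subsetDl _ _).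
rewrite (eq_bigr (fun j => b j + b t)) => [|j _]; last by rewrite (oppr_pchar2 F2).
rewrite big_split /= sumr_const mulrn_pchar2.
case: (odd #|W|); last by rewrite addr0; apply: freeU.
rewrite addrC -big_setU1 //=; apply: freeU; first by rewrite subUset sub1set tU.
by apply/set0Pn; exists t; rewrite setU11.
Qed.

End Char2.

Lemma vander_sparse_eq0 (K : fieldType) (g m : nat) (x u : 'I_g -> K) :
  injective x -> (#|[set k | u k != 0%R]| <= m)%N ->
  (forall t, (t < m)%N -> \sum_k u k * x k ^+ t = 0) -> forall k, u k = 0.
Proof.
move=> inj_x supp_u sum_u0 k0; apply/eqP/negP => /negP uk0.
set S := [set k | u k != 0] in supp_u.
pose P : {poly K} := \prod_(a <- [seq x k | k <- enum (S :\ k0)]) ('X - a%:P).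
have sizeP : (size P <= m)%N.
  rewrite size_prod_XsubC size_map -cardE (leq_trans _ supp_u) //.
  by rewrite (cardsD1 k0 S) inE uk0.
have sum_uP : \sum_k u k * P.[x k] = 0.
  under eq_bigr do rewrite horner_coef mulr_sumr.
  rewrite exchange_big big1 // => t _; under eq_bigr do rewrite mulrCA.
  by rewrite -mulr_sumr sum_u0 ?mulr0 // (leq_trans _ sizeP).
have Px : {in S :\ k0, forall k, P.[x k] = 0}.
  by move=> k kS; apply/rootP; rewrite root_prod_XsubC map_f // mem_enum.
move: sum_uP; rewrite (bigD1 k0) //= big1 => [|k kk0]; last first.
  by have [/eqP -> | ukn] := boolP (u k == 0); rewrite ?mul0r // Px ?mulr0 // !inE kk0.
rewrite addr0 => /eqP; rewrite mulf_eq0 (negbTE uk0) /= -rootE root_prod_XsubC.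
case/mapP => k; rewrite mem_enum !inE => /andP[kk0 _] /inj_x eq_k.
by rewrite eq_k eqxx in kk0.
Qed.

Section ColumnIndependence.
Variables (F : fieldType) (m n : nat) (M : 'M[F]_(m, n)) (S : {set 'I_n}).

Lemma cols_indep_from_ker :
  (forall c : 'I_n -> F, {in ~: S, forall j, c j = 0} ->
     (forall i, \sum_j c j * M i j = 0) -> forall j, c j = 0) ->
  cols_indep M S.
Proof.
move=> kerM; rewrite /cols_indep -kermx_eq0; apply/negP => /negP nzK.
set Ms := (colsub _ M)^T in nzK; set v := nz_row (kermx Ms).
have /eqP[] : v != 0 by rewrite nz_row_eq0.
have /sub_kermxP vMs : (v <= kermx Ms)%MS by apply: nz_row_sub.
pose c j := \sum_(l | enum_val l == j) v 0 l.
have cS : {in ~: S, forall j, c j = 0}.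
  move=> j; rewrite inE => jS; rewrite /c big_pred0 // => l.
  by apply: contraNF jS => /eqP <-; apply: enum_valP.
have cM i : \sum_j c j * M i j = 0.
  move/rowP: vMs => /(_ i); rewrite !mxE => sum0; rewrite -[RHS]sum0.
  rewrite (partition_big (fun l => enum_val l) xpredT) //=; apply: eq_bigr => j _.
  by rewrite mulr_suml; apply: eq_big => [l //|l /eqP <-]; rewrite !mxE.
apply/rowP => l; rewrite mxE; have := kerM c cS cM (enum_val l).
by rewrite /c (big_pred1 l) // => l'; apply: (inj_eq enum_val_inj).
Qed.

Lemma cols_indep_card_leq_rank : cols_indep M S -> (#|S| <= \rank M)%N.
Proof.
rewrite /cols_indep /row_free => /eqP <-.
set f := fun i : 'I_#|S| => enum_val i.
have -> : colsub f M = (rowsub f M^T)^T by apply/matrixP => i j; rewrite !mxE.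
by rewrite trmxK -[leqRHS]mxrank_tr mxrankS // rowsub_sub.
Qed.

End ColumnIndependence.

Lemma gen_MDS_const1 (F : fieldType) r : (0 < r)%N -> gen_MDS (const_mx 1 : 'M[F]_(1, r)).
Proof.
move=> r_gt0; split.
  rewrite rank_rV; apply/eqP; rewrite eqb1; apply/eqP => /matrixP/(_ 0 (Ordinal r_gt0)).
  by rewrite !mxE => /eqP; rewrite oner_eq0.
move=> v nz_v; rewrite /wt subnK // -[leqLHS](card_ord r) subset_leq_card //.
apply/subsetP => j _; rewrite inE !mxE big_ord1 !mxE mulr1.
by apply: contraNneq nz_v => v0; apply/eqP/rowP => i; rewrite ord1 v0 mxE.
Qed.

Section Groups.
Variables g r : nat.

Lemma grp_subproof (j : 'I_(g * r)) : (j %/ r < g)%N.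
Proof.
by case: r j => [|r'] [j lt_j] /=; [rewrite muln0 in lt_j | rewrite ltn_divLR].
Qed.

Definition grp (j : 'I_(g * r)) : 'I_g := Ordinal (grp_subproof j).

Lemma mem_group_of j k : (j \in group_of r k) = (grp j == k).
Proof. by rewrite inE. Qed.

Lemma grp_col (k : 'I_g) (y : 'I_r) : grp (Ordinal (mr_col_lt k y)) = k.
Proof.
by apply: val_inj; rewrite /= divnMDl ?divn_small ?addn0 // (leq_ltn_trans _ (ltn_ord y)).
Qed.

Lemma grp_mod_inj (j1 j2 : 'I_(g * r)) :
  grp j1 = grp j2 -> (j1 %% r = j2 %% r)%N -> j1 = j2.
Proof.
move=> /(congr1 val) /= eq_div eq_mod; apply: val_inj.
by rewrite /= (divn_eq j1 r) eq_div eq_mod -divn_eq.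
Qed.

Lemma transversalP (T : {set 'I_(g * r)}) :
  (forall k, #|T :&: group_of r k| = 1%N) ->
  exists t : 'I_g -> 'I_(g * r),
    [/\ forall k, grp (t k) = k, forall k, t k \in T & {in T, forall j, t (grp j) = j}].
Proof.
move=> T1; have /fin_all_exists[t Tt] k : exists j, T :&: group_of r k = [set j].
  by apply/cards1P/eqP.
have tP k : t k \in T :&: group_of r k by rewrite Tt set11.
exists t; split=> [k | k | j jT].
- by have := tP k; rewrite inE mem_group_of => /andP[_ /eqP].
- by have := tP k; rewrite inE => /andP[].
have : j \in T :&: group_of r (grp j) by rewrite inE mem_group_of jT eqxx.
by rewrite Tt inE => /eqP.
Qed.

Lemma sum_kernel_shift (R : pzRingType) (T U : {set 'I_(g * r)}) (t : 'I_g -> 'I_(g * r))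
    (c : 'I_(g * r) -> R) :
  (forall k, grp (t k) = k) -> {in T, forall j, t (grp j) = j} ->
  {in ~: (T :|: U), forall j, c j = 0} -> (forall k, \sum_(j | grp j == k) c j = 0) ->
  forall f, \sum_j c j * f j = \sum_(j in U) c j * (f j - f (t (grp j))).
Proof.
move=> grp_t tT cTU sum_grp f.
have sum_t : \sum_j c j * f (t (grp j)) = 0.
  rewrite (partition_big grp xpredT) //= big1 // => k _.
  rewrite (eq_bigr (fun j => c j * f (t k))) => [|j /eqP -> //].
  by rewrite -mulr_suml sum_grp mul0r.
transitivity (\sum_j c j * f j - \sum_j c j * f (t (grp j))).
  by rewrite sum_t subr0.
rewrite -sumrB [RHS]big_mkcond; apply: eq_bigr => j _.
rewrite -mulrBr; case: ifP => // jU; have [jT | jT] := boolP (j \in T).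
  by rewrite tT // subrr mulr0.
by rewrite cTU ?mul0r // !inE negb_or jT jU.
Qed.

Lemma recovery_pattern_exists h : (0 < r)%N -> (g + h <= g * r)%N ->
  exists T U : {set 'I_(g * r)},
    [/\ forall k, #|T :&: group_of r k| = 1%N, #|T| = g, #|U| = h & [disjoint T & U]].
Proof.
move=> r_gt0 le_ghr; pose t0 (k : 'I_g) := Ordinal (mr_col_lt k (Ordinal r_gt0)).
have grp_t0 k : grp (t0 k) = k by apply: grp_col.
pose T := [set t0 k | k in 'I_g].
have cardT : #|T| = g.
  by rewrite card_imset ?card_ord // => k1 k2 /(congr1 grp); rewrite !grp_t0.
have : (h <= #|~: T|)%N.
  by rewrite cardsCs setCK card_ord cardT leq_subRL // (leq_trans _ le_ghr) ?leq_addr.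
case/card_geqP => s [uniq_s size_s sub_s]; exists T, [set j in s]; split.
- move=> k; apply/eqP/cards1P; exists (t0 k); apply/setP => j.
  rewrite in_setI mem_group_of in_set1; apply/andP/eqP => [[/imsetP[k' _ ->] /eqP] | ->].
    by rewrite grp_t0 => ->.
  by rewrite grp_t0 imset_f.
- by [].
- by rewrite cardsE (card_uniqP uniq_s).
- rewrite -setI_eq0; apply/eqP/setP => j; rewrite !inE.
  by apply/andP => -[jT /sub_s]; rewrite inE jT.
Qed.

End Groups.
Arguments grp {g r} j.

Section ParityCheck.
Variables (F : fieldType) (g r h : nat) (al : 'I_(g * r) -> F).
Hypothesis F2 : 2 \in [pchar F].

Definition lrc_mx : 'M[F]_(g * 1 + h, g * r) :=
  \matrix_(i, j) if (i < g)%N then (i == grp j :> nat)%:R else al j ^+ (2 ^ (i - g)).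

Lemma lrc_mx_ker (c : 'I_(g * r) -> F) :
  (forall i, \sum_j c j * lrc_mx i j = 0) ->
  (forall k : 'I_g, \sum_(j | grp j == k) c j = 0) /\
  (forall i, (i < h)%N -> \sum_j c j * al j ^+ (2 ^ i) = 0).
Proof.
move=> c_ker; split=> [k | i lt_ih].
  have lt_k : (k < g * 1 + h)%N by rewrite muln1 ltn_addr.
  rewrite big_mkcond -[RHS](c_ker (Ordinal lt_k)); apply: eq_bigr => j _.
  rewrite mxE /= ltn_ord eq_sym -[(j %/ r)%N]/(grp j : nat) val_eqE.
  by case: eqP; rewrite ?mulr1 ?mulr0.
have lt_gi : (g + i < g * 1 + h)%N by rewrite muln1 ltn_add2l.
rewrite -[RHS](c_ker (Ordinal lt_gi)); apply: eq_bigr => j _.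
by rewrite mxE /= ltnNge leq_addr addKn.
Qed.

Hypothesis al_free : forall (t : 'I_g -> 'I_(g * r)) (U : {set 'I_(g * r)}),
  (forall k, grp (t k) = k) -> (forall k, t k \notin U) -> (#|U| <= h)%N ->
  F2_free U (fun j => al j - al (t (grp j))).

Lemma lrc_mx_recoverable (T U : {set 'I_(g * r)}) :
  (forall k, #|T :&: group_of r k| = 1%N) -> #|U| = h -> [disjoint T & U] ->
  cols_indep lrc_mx (T :|: U).
Proof.
move=> T1 cardU disjTU; apply: cols_indep_from_ker => c cTU c_ker.
have [sum_grp sum_pow] := lrc_mx_ker c_ker.
have [t [grp_t tT Tt]] := transversalP T1.
have shift := sum_kernel_shift grp_t Tt cTU sum_grp.
have cU : {in U, forall j, c j = 0}.
  apply: (moore_eq0 F2 (al_free grp_t _ _)); rewrite ?cardU //.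
    by move=> k; rewrite (disjointFr disjTU (tT k)).
  move=> i lt_ih; rewrite -[RHS](sum_pow i lt_ih) shift.
  by apply: eq_bigr => j _; rewrite exprB_pow2.
move=> j0; have [/cU // | j0U] := boolP (j0 \in U).
have := shift (fun j => (j == j0)%:R).
rewrite [RHS]big1 => [|j /cU ->]; last by rewrite mul0r.
by rewrite (bigD1 j0) //= eqxx mulr1 big1 ?addr0 // => j /negbTE ->; rewrite mulr0.
Qed.

Hypothesis r_gt0 : (0 < r)%N.

Lemma blockA_lrc_mx k : blockA lrc_mx k = const_mx 1.
Proof.
apply/matrixP => x y; rewrite !mxE /= (ord1 x) muln1 addn0 ltn_ord.
by rewrite -[X in _ == X]/(grp (Ordinal (mr_col_lt k y)) : nat) grp_col eqxx.
Qed.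

Lemma lrc_mx_parity_check : (g + h <= g * r)%N -> MR_parity_check lrc_mx.
Proof.
move=> le_ghr; split.
- move=> i j lt_ig ne_ij; have lt_ig' := leq_trans lt_ig (eq_leq (muln1 g)).
  by rewrite mxE lt_ig' -[X in X == _](divn1 i) (negbTE ne_ij).
- have [T [U [T1 cardT cardU disjTU]]] := recovery_pattern_exists r_gt0 le_ghr.
  apply/eqP; rewrite eqn_leq rank_leq_row /=.
  apply: leq_trans (cols_indep_card_leq_rank (lrc_mx_recoverable T1 cardU disjTU)).
  by rewrite cardsU (disjoint_setI0 disjTU) cards0 subn0 cardT cardU muln1.
- by move=> k; rewrite blockA_lrc_mx; apply: gen_MDS_const1.
- exact: lrc_mx_recoverable.
Qed.
End ParityCheck.

Section Construction.
Variables (K F : fieldType) (g r m : nat).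
Hypothesis K2 : 2 \in [pchar K].
Hypothesis r_gt0 : (0 < r)%N.
Variables (x : 'I_g -> K) (e : 'I_r -> K) (phi : {additive {ffun 'I_m -> K} -> F}).
Hypotheses (x_inj : injective x) (e_free : F2_free [set: 'I_r] e).
Hypothesis phi_inj : injective phi.

Definition pos (j : 'I_(g * r)) : 'I_r := Ordinal (ltn_pmod j r_gt0).

Definition lrc_points (j : 'I_(g * r)) : F :=
  phi [ffun i : 'I_m => e (pos j) * x (grp j) ^+ i].

Lemma group_shift_sum_neq0 (k : 'I_g) (t : 'I_(g * r)) (W : {set 'I_(g * r)}) :
  grp t = k -> t \notin W -> W != set0 -> {in W, forall j, grp j = k} ->
  \sum_(j in W) (e (pos j) - e (pos t)) != 0.
Proof.
move=> grp_t tW nzW grpW.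
have grp_tW : {in t |: W, forall j, grp j = k} by move=> j /setU1P[-> | /grpW].
have pos_inj : {in t |: W &, injective pos}.
  move=> j1 j2 /grp_tW grp_j1 /grp_tW grp_j2 /(congr1 val) /=.
  by apply: grp_mod_inj; rewrite grp_j1 grp_j2.
have pos_injW : {in W &, injective pos}.
  by move=> j1 j2 j1W j2W; apply: pos_inj; rewrite setU1r.
rewrite -(big_imset (fun y => e y - e (pos t)) pos_injW) /=.
apply: (F2_free_shift K2 e_free (in_setT (pos t))).
  apply/subsetP => _ /imsetP[j jW ->]; rewrite !inE andbT.
  by apply: contraNneq tW => /esym/pos_inj eq_tj; rewrite eq_tj ?setU11 ?setU1r.
by rewrite -card_gt0 card_in_imset ?card_gt0.
Qed.

Lemma lrc_points_free (t : 'I_g -> 'I_(g * r)) (U : {set 'I_(g * r)}) :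
  (forall k, grp (t k) = k) -> (forall k, t k \notin U) -> (#|grp @: U| <= m)%N ->
  F2_free U (fun j => lrc_points j - lrc_points (t (grp j))).
Proof.
move=> grp_t tU small_U W sWU nzW; apply/eqP => sum0.
pose u k := \sum_(j in W | grp j == k) (e (pos j) - e (pos (t k))).
have sum_coords i : (i < m)%N -> \sum_k u k * x k ^+ i = 0.
  move=> lt_im; move/eqP: sum0; under eq_bigr do rewrite -raddfB.
  rewrite -raddf_sum raddf_eq0 // => /eqP/ffunP/(_ (Ordinal lt_im)).
  rewrite sum_ffunE ffunE => sum0; rewrite -[RHS]sum0 (partition_big grp xpredT) //=.
  apply: eq_bigr => k _; rewrite mulr_suml; apply: eq_big => // j /andP[_ /eqP <-].
  by rewrite !ffunE grp_t mulrBl.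
have supp_u : (#|[set k | u k != 0%R]| <= m)%N.
  apply: leq_trans small_U; apply/subset_leq_card/subsetP => k; rewrite inE.
  apply: contraNT => kU; rewrite /u big_pred0 // => j.
  by apply: contraNF kU => /andP[/(subsetP sWU) jU /eqP <-]; apply: imset_f.
have /set0Pn[j0 j0W] := nzW; pose W0 := [set j in W | grp j == grp j0].
have : u (grp j0) != 0.
  rewrite /u (eq_bigl (mem W0)) => [|j]; last by rewrite !inE.
  apply: group_shift_sum_neq0 (grp_t _) _ _ _.
  - by rewrite inE negb_and (contraNN (subsetP sWU _)) ?tU.
  - by apply/set0Pn; exists j0; rewrite inE j0W eqxx.
  - by move=> j; rewrite inE => /andP[_ /eqP].
by rewrite (vander_sparse_eq0 x_inj supp_u sum_coords) eqxx.
Qed.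
End Construction.

Lemma pchar2_coords (K : finFieldType) n : 2 \in [pchar K] -> #|K| = (2 ^ n)%N ->
  exists (sigma : {additive K -> 'rV['F_2]_n}) (rho : {additive 'rV['F_2]_n -> K}),
    cancel sigma rho /\ cancel rho sigma.
Proof.
move=> K2 cardK; have [f lin_f [f' fK f'K]] := pprimeChar_vectAxiom K2.
have dimK : logn 2 #|pPrimeCharType K2| = n by rewrite cardK pfactorK.
move: (logn 2 _) dimK f lin_f f' fK f'K => _ -> f lin_f f' fK f'K.
have fB : GRing.zmod_morphism f.
  by move=> x y; rewrite addrC -scaleN1r lin_f scaleN1r addrC.
pose sigma := HB.pack_for {additive K -> 'rV['F_2]_n} f
  (GRing.isZmodMorphism.Build K _ f fB).
have f'B : GRing.zmod_morphism f' := can2_zmod_morphism (f := sigma) fK f'K.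
exists sigma, (HB.pack_for {additive 'rV['F_2]_n -> K} f'
  (GRing.isZmodMorphism.Build _ K f' f'B)).
by [].
Qed.

Lemma F2_free_family_exists (K : finFieldType) r : 2 \in [pchar K] -> (2 ^ r <= #|K|)%N ->
  exists e : 'I_r -> K, F2_free [set: 'I_r] e.
Proof.
move=> K2 le_rK; have [sigma [rho [sK rK]]] := pchar2_coords K2 (card_pprimeChar K2).
have le_rs : (r <= logn 2 #|K|)%N by rewrite -(@leq_exp2l 2) // -card_pprimeChar.
exists (fun y => rho (delta_mx 0 (widen_ord le_rs y))) => W _ /set0Pn[y0 y0W].
apply: contraTneq isT => /(congr1 (fun z => sigma z 0 (widen_ord le_rs y0))).
rewrite raddf_sum raddf0 summxE (bigD1 y0) //= big1 => [|y]; last first.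
  move=> /andP[_ ne_yy0]; rewrite rK mxE eqxx -val_eqE /= val_eqE.
  by rewrite eq_sym (negbTE ne_yy0).
by rewrite rK !mxE !eqxx addr0 => /eqP; rewrite oner_eq0.
Qed.

Lemma pchar2_additive_embedding (K F : finFieldType) m : 2 \in [pchar K] -> 2 \in [pchar F] ->
  #|F| = (#|K| ^ m)%N -> exists phi : {additive {ffun 'I_m -> K} -> F}, injective phi.
Proof.
move=> K2 F2 cardF; set s := logn 2 #|K|.
have [sigma [rhoK [sK _]]] := pchar2_coords K2 (card_pprimeChar K2).
have cardF2 : #|F| = (2 ^ (m * s))%N by rewrite cardF (card_pprimeChar K2) -expnM mulnC.
have [sigmaF [rho [_ rK]]] := pchar2_coords F2 cardF2.
pose coords (z : {ffun 'I_m -> K}) := \matrix_(t < m, a < s) sigma (z t) 0 a.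
pose phi z := rho (mxvec (coords z)).
have phiB : GRing.zmod_morphism phi.
  move=> z1 z2; rewrite /phi -raddfB -raddfB; congr (rho (mxvec _)).
  by apply/matrixP => t a; rewrite /coords !mxE !ffunE (raddfB sigma) !mxE.
exists (HB.pack_for {additive {ffun 'I_m -> K} -> F} phi
  (GRing.isZmodMorphism.Build _ F phi phiB)) => z1 z2 /=.
move=> /(can_inj rK) /(can_inj mxvecK) /matrixP eq_coords; apply/ffunP => t.
by apply: (can_inj sK); apply/rowP => a; have := eq_coords t a; rewrite !mxE.
Qed.

Lemma MR_LRC_of_pchar2_fields (K F : finFieldType) (g r h : nat) :
  2 \in [pchar K] -> 2 \in [pchar F] -> (0 < r)%N -> (g + h <= g * r)%N ->
  (g <= #|K|)%N -> (2 ^ r <= #|K|)%N -> #|F| = (#|K| ^ minn h g)%N ->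
  MR_LRC F g r h 1.
Proof.
move=> K2 F2 r_gt0 le_ghr le_gK le_rK cardF.
have [e e_free] := F2_free_family_exists K2 le_rK.
have [phi phi_inj] := pchar2_additive_embedding K2 F2 cardF.
pose x (k : 'I_g) : K := enum_val (widen_ord le_gK k).
have x_inj : injective x by move=> k1 k2 /enum_val_inj/(congr1 val) eq_k; apply: val_inj.
exists (lrc_mx h (lrc_points r_gt0 x e phi)); apply: lrc_mx_parity_check => //.
move=> t U grp_t tU le_Uh; apply: lrc_points_free => //.
rewrite leq_min (leq_trans (leq_imset_card _ _) le_Uh).
by rewrite (leq_trans (max_card _)) ?card_ord.
Qed.

Lemma up_log2_leq g : (0 < g)%N -> (2 ^ up_log 2 g <= 2 * g)%N.
Proof.
move=> g_gt0; have [le_g1 | lt_1g] := leqP g 1.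
  by rewrite (_ : g = 1%N) ?up_log1 //; apply/eqP; rewrite eqn_leq le_g1.
have := up_log_gtn (isT : (1 < 2)%N) lt_1g.
by case: (up_log 2 g) => [|k] /= lt_kg; rewrite ?muln_gt0 // expnS leq_mul2l ltnW.
Qed.

Local Close Scope ring_scope.

(* Õ(n/r) = Õ(g) is rendered as C * g * (floor(log2 g) + 1)^K for absolute
   constants C, K (independent of r, h, g). *)
Theorem theorem3p10 :
  exists C K : nat,
  forall r h g : nat, (0 < r)%N -> (0 < h)%N -> (0 < g)%N -> (g + h < g * r)%N ->
  exists F : finFieldType,
    (#|F| <= (maxn (C * g * (trunc_log 2 g).+1 ^ K) (2 ^ r)) ^ (minn h g))%N /\
    MR_LRC F g r h 1.
Proof.
exists 2, 0 => r h g r_gt0 h_gt0 g_gt0 lt_ghr.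
set s := maxn r (up_log 2 g); set m := minn h g.
have s_gt0 : 0 < s by rewrite leq_max r_gt0.
have m_gt0 : 0 < m by rewrite leq_min h_gt0 g_gt0.
have ms_gt0 : 0 < m * s by rewrite muln_gt0 m_gt0 s_gt0.
have [K K2 cardK] := pPrimePowerField (isT : prime 2) s_gt0.
have [F F2 cardF] := pPrimePowerField (isT : prime 2) ms_gt0.
exists F; split.
  rewrite cardF mulnC expnM (leq_exp2r _ _ m_gt0) expn0 muln1.
  have [le_ru | /ltnW le_ur] := leqP r (up_log 2 g).
    by rewrite /s (maxn_idPr le_ru) (leq_trans (up_log2_leq g_gt0)) ?leq_maxl.
  by rewrite /s (maxn_idPl le_ur) leq_maxr.
apply: (MR_LRC_of_pchar2_fields K2 F2 r_gt0 (ltnW lt_ghr)); rewrite cardK.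
- exact: leq_trans (up_logP _ (isT : 1 < 2)) (leq_pexp2l _ (leq_maxr _ _)).
- exact: leq_pexp2l _ (leq_maxl _ _).
- by rewrite -expnM mulnC.
Qed.
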